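(* Let $q,n,a,h,t$ be positive integers with $a\le q-1$, $h\le n$, and $a\le t\le ah$. Let $\mathcal C\subseteq[q]^n$ be an $(a,h,t)^\circ$-AED code. Then $|\mathcal C|\le\frac{q^n}{t+1}$.
   Context: $[q]=\{0,1,\dots,q-1\}$ and $+_q$ denotes coordinatewise addition modulo $q$. Cyclic asymmetric channel: an input $\mathbf x\in[q]^n$ can produce any output $\mathbf y=\mathbf x+_q\mathbf f$, where $\mathbf f\in[q]^n$ satisfies (1) $0\le f_i\le a$ for all $i$; (2) $\sum_{i=1}^n\mathbb 1_{\{f_i\ne0\}}\le h$; (3) $\sum_{i=1}^n f_i\le t$. These are called $(a,h,t)^\circ$-asymmetric errors; $\mathrm{Out}^\circ(\mathbf x)$ denotes the set of all such outputs. A code $\mathcal C\subseteq[q]^n$ is $(a,h,t)^\circ$-AED if for all $\mathbf x\in\mathcal C$ and $\mathbf y\in\mathrm{Out}^\circ(\mathbf x)$ with $\mathbf y\ne\mathbf x$, we have $\mathbf y\notin\mathcal C$. *)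

From mathcomp Require Import all_boot.
Set Implicit Arguments. Unset Strict Implicit. Unset Printing Implicit Defensive.

Definition word (q n : nat) := {ffun 'I_n -> 'I_q}.

Definition is_err (n a h t : nat) (f : {ffun 'I_n -> nat}) : bool :=
  [&& [forall i, f i <= a],
      #|[set i | f i != 0]| <= h &
      \sum_(i < n) f i <= t].

Definition in_out_cyc (q n a h t : nat) (x y : word q n) : Prop :=
  exists f : {ffun 'I_n -> nat},
    is_err a h t f /\ forall i, (y i : nat) = (x i + f i) %% q.

Definition cyc_AED (q n a h t : nat) (C : {set word q n}) : Prop :=
  forall x y : word q n, x \in C -> in_out_cyc a h t x y -> y != x -> y \notin C.

(* The staircase patterns [stair a k], which put weight [a] on the first
   coordinates until the total weight [k] is used up, give [t + 1] translates
   [C + stair a k] (k = 0..t) of the code. They are pairwise disjoint: if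
   [x + stair a k = y + stair a l] with [k < l], then [x = y + (stair a l - stair a k)],
   and this difference is itself an [(a,h,t)]-error pattern that is nonzero
   (hence [x <> y]), contradicting the AED property. *)

From mathcomp Require Import all_boot zify.

Set Implicit Arguments.
Unset Strict Implicit.
Unset Printing Implicit Defensive.

Lemma modn_addr_inj q d x y : x < q -> y < q -> (x + d) %% q = (y + d) %% q -> x = y.
Proof. by move=> xq yq /eqP; rewrite eqn_modDr => /eqP; rewrite !modn_small. Qed.

Lemma modn_addr_neq q d y : 0 < d < q -> y < q -> (y + d) %% q != y.
Proof.
move=> /andP[d_gt0 d_lt_q] y_lt_q; apply/eqP => /eqP.
rewrite -{2}(modn_small y_lt_q) -{2}[y]addn0 eqn_modDl mod0n modn_small //.
by rewrite eqn0Ngt d_gt0.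
Qed.

Lemma card_set_ord_lt n h : #|[set i : 'I_n | i < h]| <= h.
Proof.
rewrite cardE -(size_map val) -[leqRHS](size_iota 0).
apply: uniq_leq_size; first by rewrite map_inj_uniq ?enum_uniq //; apply: val_inj.
by move=> j /mapP[i]; rewrite mem_enum inE => i_lt_h ->; rewrite mem_iota.
Qed.

Definition stair (a k i : nat) : nat := minn a (k - a * i).

Lemma sum_stair a k m : \sum_(i < m) stair a k i <= k.
Proof.
elim: m k => [|m IHm] k; first by rewrite big_ord0.
rewrite big_ord_recl.
have -> : \sum_(i < m) stair a k (bump 0 i) = \sum_(i < m) stair a (k - a) i.
  by apply: eq_bigr => i _; rewrite /stair /bump add1n mulnS subnDA.
by have := IHm (k - a); rewrite /stair muln0 subn0; lia.
Qed.

Lemma stair_mono a k l i : k <= l -> stair a k i <= stair a l i.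
Proof. by rewrite /stair; lia. Qed.

Lemma is_err_stair_diff n a h t k l : k <= l <= t -> t <= a * h ->
  is_err a h t [ffun i : 'I_n => stair a l i - stair a k i].
Proof.
move=> /andP[k_le_l l_le_t] t_le_ah; apply/and3P; split.
- by apply/forallP => i; rewrite ffunE /stair; lia.
- apply: leq_trans (card_set_ord_lt n h); apply: subset_leq_card.
  apply/subsetP => i; rewrite !inE ffunE /stair => nz.
  have : a * i < a * h by lia.
  by rewrite ltn_mul2l => /andP[].
- apply: leq_trans (leq_trans (sum_stair a l n) l_le_t).
  by apply: leq_sum => i _; rewrite ffunE leq_subr.
Qed.

Lemma stair_diff_gt0 a k l : 0 < a -> k < l ->
  0 < stair a l (k %/ a) - stair a k (k %/ a).
Proof.
move=> a_gt0 k_lt_l; have := leq_divM k a; have := ltn_ceil k a_gt0.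
by rewrite /stair; lia.
Qed.

Section Translates.

Variables (q n : nat) (q_gt0 : 0 < q).

Definition shift (x : word q n) (f : 'I_n -> nat) : word q n :=
  [ffun i => Ordinal (ltn_pmod (x i + f i) q_gt0)].

Lemma shiftE x f i : (shift x f i : nat) = (x i + f i) %% q.
Proof. by rewrite ffunE. Qed.

Lemma shift_inj f : injective (shift^~ f).
Proof.
move=> x y /ffunP eq_xy; apply/ffunP => i; apply: val_inj.
by apply: (@modn_addr_inj q (f i)); rewrite ?ltn_ord // -!shiftE eq_xy.
Qed.

Lemma eq_shift x f g : f =1 g -> shift x f = shift x g.
Proof. by move=> eq_fg; apply/ffunP => i; apply: val_inj; rewrite /= !shiftE eq_fg. Qed.

Lemma shift_add x f g : shift (shift x f) g = shift x (fun i => f i + g i).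
Proof. by apply/ffunP => i; apply: val_inj; rewrite /= !shiftE modnDml addnA. Qed.

Lemma shift_neq x f i : 0 < f i < q -> shift x f != x.
Proof.
move=> fi; apply/eqP => /ffunP/(_ i)/(congr1 val)/eqP.
by rewrite /= shiftE (negbTE (modn_addr_neq fi (ltn_ord _))).
Qed.

Lemma out_shift a h t x (f : {ffun 'I_n -> nat}) :
  is_err a h t f -> in_out_cyc a h t x (shift x f).
Proof. by move=> err_f; exists f; split=> // i; rewrite shiftE. Qed.

Variables (a h t : nat) (C : {set word q n}).
Hypotheses (a_gt0 : 0 < a) (a_lt_q : a < q) (h_le_n : h <= n) (t_le_ah : t <= a * h).
Hypothesis C_AED : cyc_AED a h t C.

Lemma stair_translates_disjoint k l x y : x \in C -> y \in C -> k < l <= t ->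
  shift x (stair a k) != shift y (stair a l).
Proof.
move=> xC yC /andP[k_lt_l l_le_t]; apply/eqP => eq_translates.
pose g := [ffun i : 'I_n => stair a l i - stair a k i].
have x_def : x = shift y g.
  apply: (@shift_inj (stair a k)); rewrite eq_translates shift_add.
  by apply: eq_shift => i; rewrite ffunE subnK // stair_mono // ltnW.
have k_div_lt_n : k %/ a < n.
  rewrite ltn_divLR // mulnC (leq_trans _ (leq_mul (leqnn a) h_le_n)) //; lia.
have x_neq_y : x != y.
  rewrite x_def; apply: (@shift_neq y g (Ordinal k_div_lt_n)).
  rewrite ffunE stair_diff_gt0 //= (leq_ltn_trans _ a_lt_q) //.
  exact: leq_trans (leq_subr _ _) (geq_minl _ _).
have err_g : is_err a h t g by apply: is_err_stair_diff; rewrite ?(ltnW k_lt_l).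
by move: (C_AED yC (out_shift y err_g)); rewrite -x_def xC => /(_ x_neq_y).
Qed.

Lemma stair_translate_inj k l x y : x \in C -> y \in C -> k <= t -> l <= t ->
  shift x (stair a k) = shift y (stair a l) -> k = l /\ x = y.
Proof.
move=> xC yC k_le_t l_le_t eq_translates.
case: (ltngtP k l) => [k_lt_l | l_lt_k | k_eq_l].
- by move/eqP: eq_translates; rewrite (negbTE (stair_translates_disjoint xC yC _)) ?k_lt_l.
- by move/esym/eqP: eq_translates; rewrite (negbTE (stair_translates_disjoint yC xC _)) ?l_lt_k.
- by move: eq_translates; rewrite k_eq_l => /shift_inj.
Qed.

End Translates.

Theorem theorem5 (q n a h t : nat) (C : {set word q n}) :
  0 < q -> 0 < n -> 0 < a -> 0 < h -> 0 < t ->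
  a <= q - 1 -> h <= n -> a <= t -> t <= a * h ->
  cyc_AED a h t C ->
  #|C| * (t + 1) <= q ^ n.
Proof.
move=> q_gt0 _ a_gt0 _ _ a_le_q1 h_le_n _ t_le_ah C_AED.
have a_lt_q : a < q by lia.
pose translate (p : 'I_(t + 1) * word q n) := shift q_gt0 p.2 (stair a p.1).
have translate_inj : {in setX [set: 'I_(t + 1)] C &, injective translate}.
  move=> [k x] [l y]; rewrite !inE /translate /= => xC yC eq_translates.
  have k_le_t : k <= t by have := ltn_ord k; lia.
  have l_le_t : l <= t by have := ltn_ord l; lia.
  have [k_eq_l ->] := stair_translate_inj a_gt0 a_lt_q h_le_n t_le_ah C_AED
    xC yC k_le_t l_le_t eq_translates.
  by rewrite (val_inj k_eq_l).
rewrite mulnC -[t + 1]card_ord -cardsT -cardsX -(card_in_imset translate_inj).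
by apply: leq_trans (max_card _) _; rewrite card_ffun !card_ord.
Qed.
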